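(* Let $n\ge0$, let $\lambda$ be an integer partition with $|\lambda|=k$, and let $f_\lambda$ be the number of standard Young tableaux of shape $\lambda$. Then $$T^{(n)}_{\varnothing,\lambda}=(n+1)!\binom{n}{k}f_\lambda \qquad\text{and}\qquad T^{(n)}_{\lambda,\varnothing}=\frac{(n+1)!}{(k+1)!}\binom{n}{k}f_\lambda.$$
   Context: Young's lattice $\mathcal{Y}$ is the set of integer partitions (Young diagrams) ordered by inclusion of diagrams; $\mu\lessdot\nu$ means $\nu$ is obtained from $\mu$ by adding one cell, and $\nu\gtrdot\mu$ is the same relation reversed; $\varnothing$ is the empty partition. For partitions $\mu,\nu$, $T^{(n)}_{\mu,\nu}$ is the number of sequences $(\lambda^{(0)},\dots,\lambda^{(3n)})\in\mathcal{Y}^{3n+1}$ with $\lambda^{(0)}=\mu$, $\lambda^{(3n)}=\nu$, and such that for $0\le i<3n$: if $i\equiv0$ or $1\pmod 3$ then either $\lambda^{(i)}\lessdot\lambda^{(i+1)}$ or $\lambda^{(i)}=\lambda^{(i+1)}$; if $i\equiv2\pmod3$ then $\lambda^{(i)}\gtrdot\lambda^{(i+1)}$. *)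

From mathcomp Require Import all_boot.
Set Implicit Arguments. Unset Strict Implicit. Unset Printing Implicit Defensive.

Definition is_part (l : seq nat) : bool :=
  sorted geq l && all (fun x => 0 < x) l.

Definition psize (l : seq nat) : nat := sumn l.

Definition lessdot (mu nu : seq nat) : Prop :=
  is_part mu /\ is_part nu /\ exists j, nu = incr_nth mu j.

(* Valid sequences (lambda^(0), ..., lambda^(3n)) counted by T^(n)_{mu,nu}. *)
Definition T_walk (n : nat) (mu nu : seq nat) (w : seq (seq nat)) : Prop :=
  size w = 3 * n + 1 /\
  (forall l, l \in w -> is_part l) /\
  nth [::] w 0 = mu /\ nth [::] w (3 * n) = nu /\
  (forall i, i < 3 * n ->
     let a := nth [::] w i in let b := nth [::] w i.+1 in
     if i %% 3 < 2 then (lessdot a b \/ a = b) else lessdot b a).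

Definition is_syt (lam : seq nat) (t : seq (seq nat)) : Prop :=
  map size t = lam /\
  perm_eq (flatten t) (iota 1 (psize lam)) /\
  (forall r, r \in t -> sorted ltn r) /\
  (forall i j, j < size (nth [::] t i.+1) ->
     nth 0 (nth [::] t i) j < nth 0 (nth [::] t i.+1) j).

Definition has_card (T : eqType) (P : T -> Prop) (m : nat) : Prop :=
  exists s : seq T, uniq s /\ (forall x, x \in s <-> P x) /\ size s = m.

From mathcomp Require Import all_boot zify.

Set Implicit Arguments. Unset Strict Implicit. Unset Printing Implicit Defensive.

(* Let [nsyt nu] be the number of saturated chains from the empty partition
   to [nu] in Young's lattice.  The up and down operators of the lattice
   satisfy [DU = UD + I]; by induction on [|lam|] this gives
   [sum_(nu covers lam) nsyt nu = (|lam| + 1) nsyt lam].  Hence the number of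
   walks of length [m] from [[::]] to [lam] (resp. from [lam] to [[::]]) is
   [G_m |lam| * nsyt lam], where appending (resp. prepending) one step changes
   [G] by an explicit linear rule; over one period of three steps this rule is
   the recurrence satisfied by [(n+1)! C(n,k)] (resp. [(n+1)!/(k+1)! C(n,k)]).
   Finally [nsyt lam] counts standard Young tableaux, by removing the cell
   that holds the largest entry. *)

Lemma is_partP l : is_part l <->
  (forall k, nth 0 l k.+1 <= nth 0 l k) /\ (forall k, (k < size l) = (0 < nth 0 l k)).
Proof.
rewrite /is_part; split.
- case/andP => /(sortedP 0) Hs /(all_nthP 0) Ha; split=> k.
  + case: (ltnP k.+1 (size l)) => H; first exact: Hs.
    by rewrite (nth_default 0 H).
  + case: (ltnP k (size l)) => H; first by rewrite Ha.
    by rewrite (nth_default 0 H) ltnn.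
- case=> Hm Hz; apply/andP; split.
  + by apply/(sortedP 0) => i _; exact: Hm.
  + by apply/(all_nthP 0) => i Hi; rewrite -Hz.
Qed.

Section PartitionNth.
Variable l : seq nat.
Hypothesis Hl : is_part l.

Lemma part_nth_leS k : nth 0 l k.+1 <= nth 0 l k.
Proof. by case/is_partP: Hl. Qed.

Lemma part_nth_gt0 k : (0 < nth 0 l k) = (k < size l).
Proof. by case/is_partP: Hl. Qed.

Lemma part_size_eq m : (forall k, (k < m) = (0 < nth 0 l k)) -> size l = m.
Proof.
move=> Hm; apply/eqP; rewrite eqn_leq.
by rewrite leqNgt -part_nth_gt0 -Hm ltnn /= leqNgt Hm part_nth_gt0 ltnn.
Qed.

End PartitionNth.

Lemma part_eq_from_nth a b : is_part a -> is_part b ->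
  (forall k, nth 0 a k = nth 0 b k) -> a = b.
Proof.
move=> Ha Hb Hab; apply: (eq_from_nth (x0 := 0)) => [|i _]; last exact: Hab.
by apply: part_size_eq => // k; rewrite Hab part_nth_gt0.
Qed.

Lemma nonincreasing_nth_leD (s : seq nat) : (forall k, nth 0 s k.+1 <= nth 0 s k) ->
  forall m d, nth 0 s (m + d) <= nth 0 s m.
Proof.
move=> Hs m; elim=> [|d IH]; first by rewrite addn0.
by rewrite addnS; apply: leq_trans (Hs _) IH.
Qed.

(* Lowering an entry of a partition may create a trailing zero, which the
   canonical representation forbids. *)
Definition trim_zeros (s : seq nat) : seq nat := take (find (pred1 0) s) s.

Section TrimZeros.
Variable s : seq nat.
Hypothesis Hs : forall k, nth 0 s k.+1 <= nth 0 s k.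

Lemma nth_trim_zeros k : nth 0 (trim_zeros s) k = nth 0 s k.
Proof.
rewrite /trim_zeros; case: (ltnP k (find (pred1 0) s)) => Hk; first by rewrite nth_take.
rewrite nth_default; last first.
  by rewrite size_take; case: ifP => // /negbT; rewrite -leqNgt => H; exact: leq_trans H Hk.
case Hh: (has (pred1 0) s).
- have /eqP H0 := nth_find 0 Hh.
  have := nonincreasing_nth_leD Hs (find (pred1 0) s) (k - find (pred1 0) s).
  by rewrite subnKC // H0 leqn0 => /eqP ->.
- have Hf : find (pred1 0) s = size s.
    by apply/eqP; rewrite eqn_leq find_size leqNgt -has_find Hh.
  by rewrite nth_default // -Hf.
Qed.

Lemma trim_zeros_part : is_part (trim_zeros s).
Proof.
apply/is_partP; split=> k; rewrite !nth_trim_zeros //.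
rewrite /trim_zeros size_takel ?find_size //.
case: (ltnP k (find (pred1 0) s)) => Hk.
- by have /eqP := before_find 0 Hk; rewrite lt0n => /eqP ->.
- by rewrite -nth_trim_zeros nth_default // /trim_zeros size_takel ?find_size.
Qed.

End TrimZeros.

(* Adding a cell in row [i] is [incr_nth l i]; it keeps [l] a partition iff
   row [i] is [addable]. Dually, the last cell of row [j] is a corner iff row
   [j] is [removable]. *)
Definition addable (l : seq nat) i := (i == 0) || (nth 0 l i < nth 0 l i.-1).
Definition removable (l : seq nat) j := nth 0 l j.+1 < nth 0 l j.
Definition remove_cell (l : seq nat) j := trim_zeros (set_nth 0 l j (nth 0 l j).-1).

Section Cells.
Variable l : seq nat.
Hypothesis Hl : is_part l.

Lemma addable_le_size i : addable l i -> i <= size l.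
Proof.
rewrite /addable; case: i => [|i] //= H; rewrite leqNgt; apply/negP => Hi.
by move: H; rewrite !nth_default // ltnW.
Qed.

Lemma removable_lt_size j : removable l j -> j < size l.
Proof. by rewrite -part_nth_gt0 // /removable; lia. Qed.

Lemma is_part_incr_nth i : is_part (incr_nth l i) = addable l i.
Proof.
apply/idP/idP => H.
- rewrite /addable; case: i H => [|i] //= H.
  have := part_nth_leS H i; rewrite !nth_incr_nth eqxx.
  by rewrite (_ : (i.+1 == i) = false) //; lia.
- have Hs := addable_le_size H.
  apply/is_partP; split=> k.
  + rewrite !nth_incr_nth; have := part_nth_leS Hl k; move: H; rewrite /addable.
    case: (eqVneq i k.+1) => [->|H1] /=; first lia.
    case: (eqVneq i k) => [->|H2] /=; lia.
  + rewrite size_incr_nth nth_incr_nth; have := part_nth_gt0 Hl k.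
    case: (ltnP i (size l)) => H1.
    * case: (eqVneq i k) => [<-|H2] /=; last by rewrite add0n.
      by move=> _; rewrite H1.
    * have Ei : i = size l by apply/eqP; rewrite eqn_leq Hs.
      case: (eqVneq i k) => [<-|H2] /=; first by rewrite ltnSn.
      rewrite add0n => ->; subst; lia.
Qed.

End Cells.

Section RemoveCell.
Variable l : seq nat.
Hypothesis Hl : is_part l.

Lemma remove_cell_nonincreasing j : removable l j ->
  forall k, nth 0 (set_nth 0 l j (nth 0 l j).-1) k.+1
            <= nth 0 (set_nth 0 l j (nth 0 l j).-1) k.
Proof.
rewrite /removable => Hr k; rewrite !nth_set_nth /=; have := part_nth_leS Hl k.
by case: ifP => /eqP H1; case: ifP => /eqP H2; subst; lia.
Qed.

Lemma remove_cell_part j : removable l j -> is_part (remove_cell l j).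
Proof. by move=> Hr; apply/trim_zeros_part/remove_cell_nonincreasing. Qed.

Lemma nth_remove_cell j k : removable l j ->
  nth 0 (remove_cell l j) k = nth 0 l k - (j == k).
Proof.
move=> Hr; rewrite /remove_cell nth_trim_zeros; last exact: remove_cell_nonincreasing.
by rewrite nth_set_nth /=; case: eqP => H; subst; rewrite ?eqxx; lia.
Qed.

Lemma size_remove_cell j : removable l j -> size (remove_cell l j) <= size l.
Proof.
move=> Hr; rewrite leqNgt; apply/negP => H.
have := part_nth_gt0 (remove_cell_part Hr) (size l).
by rewrite H nth_remove_cell // nth_default // sub0n.
Qed.

Lemma remove_cellK j : removable l j -> incr_nth (remove_cell l j) j = l.
Proof.
move=> Hr; have Hd := remove_cell_part Hr.
have Ha : addable (remove_cell l j) j.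
  rewrite /addable; case: j Hr Hd => [|j] //= Hr Hd.
  rewrite !nth_remove_cell // eqxx (_ : (j.+1 == j) = false); last lia.
  by have := part_nth_leS Hl j; move: Hr; rewrite /removable; lia.
apply: part_eq_from_nth => //; first by rewrite (is_part_incr_nth Hd).
move=> k; rewrite nth_incr_nth nth_remove_cell //.
have := removable_lt_size Hl Hr; rewrite -part_nth_gt0 //.
by case: (eqVneq j k) => [<-|] /=; lia.
Qed.

End RemoveCell.

Lemma removable_incr_nth l i : is_part l -> removable (incr_nth l i) i.
Proof.
move=> Hl; rewrite /removable !nth_incr_nth eqxx (_ : (i == i.+1) = false); last lia.
by have := part_nth_leS Hl i; lia.
Qed.

Lemma incr_nthK l i : is_part l -> addable l i -> remove_cell (incr_nth l i) i = l.
Proof.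
move=> Hl Ha; have Hi : is_part (incr_nth l i) by rewrite (is_part_incr_nth Hl).
apply: part_eq_from_nth => //; first by apply/(remove_cell_part Hi)/removable_incr_nth.
by move=> k; rewrite nth_remove_cell ?removable_incr_nth // nth_incr_nth; lia.
Qed.

Lemma addable_remove_cell l j : is_part l -> removable l j ->
  addable (remove_cell l j) j.
Proof.
by move=> Hl Hr; rewrite -is_part_incr_nth ?remove_cellK // remove_cell_part.
Qed.

Lemma psize_incr_nth l i : psize (incr_nth l i) = (psize l).+1.
Proof.
rewrite /psize; elim: l i => [|x l IH] [|i] //=; last by rewrite IH addnS.
by elim: i => //= i ->.
Qed.

Lemma psize_remove_cell l j : is_part l -> removable l j ->
  psize l = (psize (remove_cell l j)).+1.
Proof. by move=> Hl Hr; rewrite -{1}(remove_cellK Hl Hr) psize_incr_nth. Qed.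

Lemma psize_eq0 l : is_part l -> (psize l == 0) = (l == [::]).
Proof.
case: l => [|x l] //= /is_partP [_ H]; have /= := H 0.
by rewrite /psize /= addn_eq0; case: (x) => //.
Qed.

Definition upper_covers (l : seq nat) : seq (seq nat) :=
  [seq incr_nth l i | i <- [seq i <- iota 0 (size l).+1 | addable l i]].
Definition lower_covers (l : seq nat) : seq (seq nat) :=
  [seq remove_cell l j | j <- [seq j <- iota 0 (size l) | removable l j]].

Section Covers.
Variable l : seq nat.
Hypothesis Hl : is_part l.

Lemma upper_coversP nu :
  reflect (exists2 i, addable l i & nu = incr_nth l i) (nu \in upper_covers l).
Proof.
apply: (iffP mapP).
- by case=> i; rewrite mem_filter => /andP [Ha _] ->; exists i.
- case=> i Ha ->; exists i => //; rewrite mem_filter Ha mem_iota add0n ltnS.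
  exact: addable_le_size.
Qed.

Lemma lower_coversP mu :
  reflect (exists2 j, removable l j & mu = remove_cell l j) (mu \in lower_covers l).
Proof.
apply: (iffP mapP).
- by case=> j; rewrite mem_filter => /andP [Hr _] ->; exists j.
- case=> j Hr ->; exists j => //; rewrite mem_filter Hr mem_iota add0n.
  exact: removable_lt_size.
Qed.

Lemma lessdot_upper_covers nu : lessdot l nu <-> nu \in upper_covers l.
Proof.
split.
- case=> _ [Hn [i E]]; apply/upper_coversP; exists i => //.
  by rewrite -(is_part_incr_nth Hl) -E.
- case/upper_coversP => i Ha E; do 2 split => //; last by exists i.
  by rewrite E is_part_incr_nth.
Qed.

Lemma lessdot_lower_covers mu : lessdot mu l <-> mu \in lower_covers l.
Proof.
split.
- case=> Hm [_ [i E]]; have Ha : addable mu i by rewrite -is_part_incr_nth // -E.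
  by apply/lower_coversP; exists i; rewrite E ?removable_incr_nth ?incr_nthK.
- case/lower_coversP => j Hr ->; split; first exact: remove_cell_part.
  by split => //; exists j; rewrite remove_cellK.
Qed.

Lemma upper_covers_part nu : nu \in upper_covers l ->
  is_part nu /\ psize nu = (psize l).+1.
Proof.
by case/upper_coversP => i Ha ->; rewrite is_part_incr_nth // psize_incr_nth.
Qed.

Lemma lower_covers_part mu : mu \in lower_covers l ->
  is_part mu /\ psize l = (psize mu).+1.
Proof.
by case/lower_coversP => j Hr ->; rewrite (remove_cell_part Hl) // -psize_remove_cell.
Qed.

Lemma uniq_upper_covers : uniq (upper_covers l).
Proof.
by rewrite map_inj_uniq ?filter_uniq ?iota_uniq //; apply: incr_nth_inj.
Qed.

Lemma uniq_lower_covers : uniq (lower_covers l).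
Proof.
rewrite map_inj_in_uniq ?filter_uniq ?iota_uniq //.
move=> i j; rewrite !mem_filter => /andP [Hi _] /andP [Hj _] E.
have := congr1 (fun s => nth 0 s i) E; rewrite !nth_remove_cell // eqxx.
have : 0 < nth 0 l i by move: Hi; rewrite /removable; lia.
by case: (eqVneq j i) => //=; lia.
Qed.

Lemma notin_upper_covers : l \notin upper_covers l.
Proof. by apply/negP => /upper_covers_part [_]; lia. Qed.

Lemma notin_lower_covers : l \notin lower_covers l.
Proof. by apply/negP => /lower_covers_part [_]; lia. Qed.

End Covers.

Section HasCard.
Variable T : eqType.

Lemma has_card_ext (P Q : T -> Prop) m :
  (forall x, P x <-> Q x) -> has_card P m -> has_card Q m.
Proof.
by move=> HPQ [s [Hu [Hs <-]]]; exists s; split=> //; split=> // x; rewrite Hs HPQ.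
Qed.

Lemma has_card_inj_image (U : eqType) (P : U -> Prop) (g : U -> T) m :
  has_card P m -> (forall x y, P x -> P y -> g x = g y -> x = y) ->
  has_card (fun z => exists2 x, P x & z = g x) m.
Proof.
move=> [s [Hu [Hs <-]]] Hg; exists (map g s); split; last split.
- by rewrite map_inj_in_uniq // => x y /Hs Hx /Hs Hy; apply: Hg.
- move=> z; split; first by case/mapP => x /Hs Hx ->; exists x.
  by case=> x /Hs Hx ->; apply: map_f.
- by rewrite size_map.
Qed.

Lemma has_card_bigcup (I : eqType) (idx : seq I) (P : I -> T -> Prop) (m : I -> nat)
    (Q : T -> Prop) :
  uniq idx -> (forall i, i \in idx -> has_card (P i) (m i)) ->
  (forall i1 i2 x, i1 \in idx -> i2 \in idx -> P i1 x -> P i2 x -> i1 = i2) ->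
  (forall x, Q x <-> exists2 i, i \in idx & P i x) ->
  has_card Q (\sum_(i <- idx) m i).
Proof.
elim: idx Q => [|i idx IH] Q Hu Hc Hd HQ.
  by exists [::]; rewrite big_nil; split=> //; split=> // x; rewrite HQ; split=> // [[]].
move: Hu => /= /andP [Hni Hu].
have [s1 [Hu1 [Hs1 Hz1]]] := Hc i (mem_head _ _).
have [s2 [Hu2 [Hs2 Hz2]]] : has_card (fun x => exists2 j, j \in idx & P j x)
    (\sum_(j <- idx) m j).
  apply: IH => // [j Hj|j1 j2 x H1 H2]; first by apply: Hc; rewrite inE Hj orbT.
  by apply: Hd; rewrite inE ?H1 ?H2 orbT.
exists (s1 ++ s2); split; last split; last by rewrite size_cat big_cons Hz1 Hz2.
- rewrite cat_uniq Hu1 Hu2 /= andbT; apply/hasPn => x /Hs2 [j Hj Hx].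
  apply/negP => /Hs1 Hx'; move: Hni.
  by rewrite (Hd i j x (mem_head _ _)) ?Hj // inE Hj orbT.
- move=> x; rewrite mem_cat HQ; split.
  + case/orP => [/Hs1 Hx|/Hs2 [j Hj Hx]]; first by exists i; rewrite ?mem_head.
    by exists j; rewrite // inE Hj orbT.
  + case=> j; rewrite inE => /orP [/eqP -> Hx|Hj Hx]; apply/orP.
    * by left; apply/Hs1.
    * by right; apply/Hs2; exists j.
Qed.

End HasCard.

Definition step (p : nat) (a b : seq nat) : Prop :=
  if p < 2 then lessdot a b \/ a = b else lessdot b a.

(* Walks of any length [m] whose first step has phase [ph] in the period 3 of
   [T_walk]; this is what makes walks closed under removing their first step. *)
Definition walk (ph m : nat) (a b : seq nat) (w : seq (seq nat)) : Prop :=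
  size w = m.+1 /\ (forall l, l \in w -> is_part l) /\
  nth [::] w 0 = a /\ nth [::] w m = b /\
  (forall i, i < m -> step ((ph + i) %% 3) (nth [::] w i) (nth [::] w i.+1)).

Lemma T_walkE n mu nu w : T_walk n mu nu w <-> walk 0 (3 * n) mu nu w.
Proof. by rewrite /T_walk /walk addn1. Qed.

Lemma walk_phaseD3 ph m a b w : walk (ph + 3) m a b w <-> walk ph m a b w.
Proof.
have E i : (ph + 3 + i) %% 3 = (ph + i) %% 3.
  by rewrite addnAC -modnDmr modnn addn0.
rewrite /walk; split; case=> [H1 [H2 [H3 [H4 H5]]]]; do 4 split=> //.
- by move=> i Hi; rewrite -E; apply: H5.
- by move=> i Hi; rewrite E; apply: H5.
Qed.

Definition next_shapes p a := if p < 2 then a :: upper_covers a else lower_covers a.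
Definition prev_shapes p b := if p < 2 then b :: lower_covers b else upper_covers b.

Section Steps.
Variables (p : nat) (a : seq nat).
Hypothesis Ha : is_part a.

Lemma step_next c : step p a c <-> c \in next_shapes p a.
Proof.
rewrite /step /next_shapes; case: ifP => _; last exact: lessdot_lower_covers.
rewrite inE (lessdot_upper_covers Ha); split.
- by case=> [->|->]; rewrite ?eqxx ?orbT.
- by case/orP => [/eqP ->|H]; [right|left].
Qed.

Lemma step_prev c : step p c a <-> c \in prev_shapes p a.
Proof.
rewrite /step /prev_shapes; case: ifP => _; last exact: lessdot_upper_covers.
rewrite inE (lessdot_lower_covers Ha); split.
- by case=> [->|->]; rewrite ?eqxx ?orbT.
- by case/orP => [/eqP ->|H]; [right|left].
Qed.

Lemma uniq_next_shapes : uniq (next_shapes p a).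
Proof.
rewrite /next_shapes; case: ifP => _; last exact: uniq_lower_covers.
by rewrite cons_uniq uniq_upper_covers andbT; exact: notin_upper_covers.
Qed.

Lemma uniq_prev_shapes : uniq (prev_shapes p a).
Proof.
rewrite /prev_shapes; case: ifP => _; last exact: uniq_upper_covers.
by rewrite cons_uniq (notin_lower_covers Ha) (uniq_lower_covers Ha).
Qed.

Lemma next_shapes_part c : c \in next_shapes p a -> is_part c.
Proof.
rewrite /next_shapes; case: ifP => _; last by case/lower_covers_part.
by rewrite inE => /orP [/eqP ->|/upper_covers_part []].
Qed.

Lemma prev_shapes_part c : c \in prev_shapes p a -> is_part c.
Proof.
rewrite /prev_shapes; case: ifP => _; last by case/upper_covers_part.
by rewrite inE => /orP [/eqP ->|/lower_covers_part []].
Qed.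

End Steps.

Lemma has_card_walk0 ph a b : has_card (walk ph 0 a b) (is_part a && (a == b)).
Proof.
case Ha: (is_part a); case: (eqVneq a b) => [<-|Hab] /=.
- exists [:: [:: a]]; split=> //; split=> // w; rewrite inE; split.
  + move/eqP => ->; split=> //; split; first by move=> l; rewrite inE => /eqP ->.
    by do 2 split=> //.
  + by case: w => [|x [|y w]] [//= Hs [Hp [H0 [H1 _]]]]; rewrite /= -H0.
- exists [::]; split=> //; split=> // w; split=> //.
  by case=> _ [_ [H0 [H1 _]]]; move: Hab; rewrite -H0 -H1 eqxx.
- exists [::]; split=> //; split=> // w; split=> //.
  by case=> Hs [Hp [H0 _]]; move: Ha; rewrite -H0 Hp // mem_nth // Hs.
- exists [::]; split=> //; split=> // w; split=> //.
  by case=> Hs [Hp [H0 _]]; move: Ha; rewrite -H0 Hp // mem_nth // Hs.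
Qed.

Lemma has_card_walk_cons ph m a b (G : seq nat -> nat) : is_part a ->
  (forall c, c \in next_shapes (ph %% 3) a -> has_card (walk ph.+1 m c b) (G c)) ->
  has_card (walk ph m.+1 a b) (\sum_(c <- next_shapes (ph %% 3) a) G c).
Proof.
move=> Ha HG.
apply: (@has_card_bigcup _ _ _
  (fun c w => exists2 w', walk ph.+1 m c b w' & w = a :: w')).
- exact: uniq_next_shapes.
- by move=> c Hc; apply: has_card_inj_image => [|x y _ _ []]; first exact: HG.
- by move=> c1 c2 w _ _ [w1 [_ [_ [<- _]]] ->] [w2 [_ [_ [<- _]]] []] ->.
- move=> w; split.
  + case: w => [|x w'] [//= [Hs] [Hp [H0 [Hm Hst]]]].
    exists (nth [::] w' 0).
    * by apply/step_next => //; have := Hst 0 (ltn0Sn _); rewrite addn0 /= H0.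
    * exists w'; last by rewrite H0.
      split=> //; split; first by move=> l Hl; apply: Hp; rewrite inE Hl orbT.
      do 2 split=> //; move=> i Hi.
      by have := Hst i.+1 Hi; rewrite addnS -addSn.
  + case=> c Hc [w' [Hs [Hp [H0 [Hm Hst]]]] ->].
    split; first by rewrite /= Hs.
    split; first by move=> l; rewrite inE => /orP [/eqP ->|/Hp].
    do 2 split=> //; case=> [|i] Hi /=.
    * by rewrite addn0 H0; apply/step_next.
    * by rewrite addnS -addSn; apply: Hst.
Qed.

Lemma has_card_walk_rcons ph m a b (G : seq nat -> nat) : is_part b ->
  (forall c, c \in prev_shapes ((ph + m) %% 3) b -> has_card (walk ph m a c) (G c)) ->
  has_card (walk ph m.+1 a b) (\sum_(c <- prev_shapes ((ph + m) %% 3) b) G c).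
Proof.
move=> Hb HG.
apply: (@has_card_bigcup _ _ _
  (fun c w => exists2 w', walk ph m a c w' & w = rcons w' b)).
- exact: uniq_prev_shapes.
- move=> c Hc; apply: has_card_inj_image; first exact: HG.
  by move=> x y _ _ /rcons_inj [].
- move=> c1 c2 w _ _ [w1 [_ [_ [_ [<- _]]]] ->] [w2 [_ [_ [_ [<- _]]]]].
  by move/rcons_inj => [->].
- have Hn (w' : seq (seq nat)) (x : seq nat) i : size w' = m.+1 -> i <= m ->
      nth [::] (rcons w' x) i = nth [::] w' i.
    by move=> Hs Hi; rewrite nth_rcons Hs ltnS Hi.
  have Hl (w' : seq (seq nat)) (x : seq nat) :
      size w' = m.+1 -> nth [::] (rcons w' x) m.+1 = x.
    by move=> Hs; rewrite nth_rcons Hs ltnn eqxx.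
  move=> w; split.
  + case: (lastP w) => [|w' x] [//]; rewrite size_rcons => -[Hs] [Hp [H0 [Hm Hst]]].
    rewrite Hl // in Hm; subst x.
    exists (nth [::] w' m).
    * by apply/step_prev => //; have := Hst m (ltnSn _); rewrite Hn // Hl.
    * exists w' => //; split=> //.
      split; first by move=> l Hl'; apply: Hp; rewrite mem_rcons inE Hl' orbT.
      split; first by rewrite -(Hn _ b).
      split=> // i Hi.
      by have := Hst i (ltnW Hi); rewrite !Hn // ltnW.
  + case=> c Hc [w' [Hs [Hp [H0 [Hm Hst]]]] ->].
    split; first by rewrite size_rcons Hs.
    split; first by move=> l; rewrite mem_rcons inE => /orP [/eqP ->|/Hp].
    split; first by rewrite Hn.
    split; first exact: Hl.
    move=> i; rewrite ltnS leq_eqVlt => /orP [/eqP ->|Hi].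
    * by rewrite Hn // Hl // Hm; apply/(step_prev _ Hb).
    * by rewrite !Hn // ?(ltnW Hi) //; apply: Hst.
Qed.

(* [nsyt nu] counts the saturated chains from [[::]] up to [nu] in Young's
   lattice; the fuel [psize nu] is the length of all such chains. *)
Fixpoint nsyt_rec (m : nat) (nu : seq nat) : nat :=
  if m is m'.+1 then \sum_(mu <- lower_covers nu) nsyt_rec m' mu else nu == [::].
Definition nsyt (nu : seq nat) : nat := nsyt_rec (psize nu) nu.

Lemma nsyt_lower_covers nu : is_part nu -> nu != [::] ->
  nsyt nu = \sum_(mu <- lower_covers nu) nsyt mu.
Proof.
move=> Hn; rewrite -psize_eq0 // /nsyt; case E: (psize nu) => [|m] //= _.
apply: eq_big_seq => mu Hmu; have [_] := lower_covers_part Hn Hmu.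
by rewrite E => -[->].
Qed.

Lemma sum_lower_covers_nsyt nu : is_part nu ->
  \sum_(mu <- lower_covers nu) nsyt mu = (0 < psize nu) * nsyt nu.
Proof.
move=> Hn; case: (posnP (psize nu)) => [/eqP|] Hk; last first.
  by rewrite mul1n nsyt_lower_covers // -psize_eq0 // -lt0n.
by move: (Hk); rewrite psize_eq0 // => /eqP ->; rewrite big_nil.
Qed.

Lemma sum_iota_widen (P : pred nat) (F : nat -> nat) n N : n <= N ->
  (forall i, n <= i -> P i = false) ->
  \sum_(i <- iota 0 N | P i) F i = \sum_(i <- iota 0 n | P i) F i.
Proof.
move=> H HP; rewrite -(subnKC H) iotaD big_cat /= [X in _ + X]big1_seq ?addn0 //.
by move=> i /andP [Hp]; rewrite mem_iota => /andP [Hi _]; rewrite HP in Hp.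
Qed.

Lemma sum_cond_D1 (I : eqType) (r : seq I) (P : pred I) (G : I -> nat) i :
  i \in r -> uniq r -> P i ->
  \sum_(j <- r | P j) G j = G i + \sum_(j <- r | P j && (j != i)) G j.
Proof. by move=> Hi Hr HP; rewrite big_mkcond (bigD1_seq i) //= HP big_mkcondl. Qed.

Section CoversOnIota.
Variables (l : seq nat) (N : nat).
Hypothesis Hl : is_part l.

Lemma sum_upper_covers_iota (F : seq nat -> nat) : size l < N ->
  \sum_(nu <- upper_covers l) F nu = \sum_(i <- iota 0 N | addable l i) F (incr_nth l i).
Proof.
move=> HN; rewrite /upper_covers big_map big_filter (sum_iota_widen _ HN) //.
by move=> i Hi; apply/negP => /addable_le_size; rewrite leqNgt Hi.
Qed.

Lemma sum_lower_covers_iota (F : seq nat -> nat) : size l <= N ->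
  \sum_(mu <- lower_covers l) F mu =
  \sum_(j <- iota 0 N | removable l j) F (remove_cell l j).
Proof.
move=> HN; rewrite /lower_covers big_map big_filter (sum_iota_widen _ HN) //.
by move=> i Hi; apply/negP => /(removable_lt_size Hl); rewrite ltnNge Hi.
Qed.

End CoversOnIota.

(* Row [i.+1] is addable exactly when row [i] is removable. *)
Lemma count_addable l N : is_part l -> size l < N ->
  count (addable l) (iota 0 N) = (count (removable l) (iota 0 N)).+1.
Proof.
case: N => // N Hl HN.
have -> : count (removable l) (iota 0 N.+1) = count (removable l) (iota 0 N).
  rewrite -addn1 iotaD count_cat /= add0n.
  have /negbTE -> : ~~ removable l N; last by rewrite !addn0.
  by apply/negP => /(removable_lt_size Hl); rewrite ltnNge -ltnS HN.
by rewrite /= -(addn0 1) iotaDl count_map.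
Qed.

Section CommutingCells.
Variables (l : seq nat) (i j : nat).
Hypotheses (Hl : is_part l) (Hij : i != j).

Lemma addable_removable_swap :
  addable l i && removable (incr_nth l i) j = removable l j && addable (remove_cell l j) i.
Proof.
case Hr: (removable l j) => /=.
- rewrite /addable nth_remove_cell //; case: i Hij => [|i'] Hij' /=.
  + case: j Hij' Hr => [|j'] //= _.
    by rewrite /removable !nth_incr_nth /= !add0n => ->.
  + rewrite !nth_remove_cell // /removable !nth_incr_nth; move: Hr; rewrite /removable.
    case: (eqVneq i' j) => [E|E] H2; [subst|].
    * rewrite eqxx (gtn_eqF (ltnSn j)) (ltn_eqF (ltnSn j)) /=.
      by apply/andP/idP => [[? ?]|?]; try split; lia.
    * have e1 : (i'.+1 == j.+1) = false by apply/negbTE; rewrite eqSS.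
      have e2 : (j == i') = false by apply/negbTE; rewrite eq_sym.
      have e3 : (i'.+1 == j) = false by apply/negbTE.
      have e4 : (j == i'.+1) = false by apply/negbTE; rewrite eq_sym.
      rewrite ?e1 ?e2 ?e3 ?e4 /=.
      by apply/andP/idP => [[? ?]|?]; try split; lia.
- apply/negbTE; rewrite negb_and; apply/orP; right.
  move: Hr; rewrite /removable !nth_incr_nth.
  by case: (eqVneq i j.+1) => [->|E1]; case: (eqVneq i j) => [E2|E2];
    subst; rewrite ?eqxx //=; lia.
Qed.

Lemma remove_cell_incr_nthC : removable l j -> addable (remove_cell l j) i ->
  remove_cell (incr_nth l i) j = incr_nth (remove_cell l j) i.
Proof.
move=> Hr Ha; have Hd := remove_cell_part Hl Hr.
have /andP [Ha' Hr'] : addable l i && removable (incr_nth l i) j.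
  by rewrite addable_removable_swap Hr Ha.
have Hi : is_part (incr_nth l i) by rewrite is_part_incr_nth.
apply: part_eq_from_nth; first exact: remove_cell_part.
  by rewrite is_part_incr_nth.
move=> k; rewrite nth_remove_cell // !nth_incr_nth nth_remove_cell //.
move: Hr; rewrite /removable; case: (eqVneq j k) => [<-|E]; rewrite ?eqxx.
- by rewrite (negbTE Hij) /= => H; rewrite !add0n; lia.
- by rewrite !subn0.
Qed.

End CommutingCells.

Lemma sum_cond_pair (I J : Type) (rI : seq I) (rJ : seq J) (P : pred I)
    (Q : I -> pred J) (G : I -> J -> nat) :
  \sum_(i <- rI | P i) \sum_(j <- rJ | Q i j) G i j =
  \sum_(i <- rI) \sum_(j <- rJ) (if P i && Q i j then G i j else 0).
Proof.
rewrite big_mkcond; apply: eq_bigr => i _.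
by case: (P i) => /=; [exact: big_mkcond | rewrite big1].
Qed.

Lemma sum_upper_lower_offdiag l (r : seq nat) (F : seq nat -> nat) : is_part l ->
  \sum_(i <- r | addable l i)
     \sum_(j <- r | removable (incr_nth l i) j && (j != i))
        F (remove_cell (incr_nth l i) j) =
  \sum_(j <- r | removable l j)
     \sum_(i <- r | addable (remove_cell l j) i && (i != j))
        F (incr_nth (remove_cell l j) i).
Proof.
move=> Hl; rewrite sum_cond_pair [RHS]sum_cond_pair exchange_big.
apply: eq_bigr => j _; apply: eq_bigr => i _.
case: (eqVneq i j) => [->|Hij] /=; first by rewrite !andbF.
rewrite !andbT addable_removable_swap //.
by case: ifP => // /andP [Hr Ha]; rewrite remove_cell_incr_nthC.
Qed.

Section Diagonal.
Variables (l : seq nat) (F : seq nat -> nat).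
Hypothesis Hl : is_part l.
Let N := (size l).+1.

Lemma sum_lower_covers_incr_nth i : addable l i ->
  \sum_(mu <- lower_covers (incr_nth l i)) F mu =
  F l + \sum_(j <- iota 0 N | removable (incr_nth l i) j && (j != i))
          F (remove_cell (incr_nth l i) j).
Proof.
move=> Ha; have Hi : is_part (incr_nth l i) by rewrite is_part_incr_nth.
rewrite (sum_lower_covers_iota (N := N) Hi); last first.
  by rewrite size_incr_nth; case: ifP => // _; rewrite ltnS addable_le_size.
rewrite (@sum_cond_D1 _ _ _ _ i) ?iota_uniq ?removable_incr_nth ?incr_nthK //.
by rewrite mem_iota ltnS addable_le_size.
Qed.

Lemma sum_upper_covers_remove_cell j : removable l j ->
  \sum_(nu <- upper_covers (remove_cell l j)) F nu =
  F l + \sum_(i <- iota 0 N | addable (remove_cell l j) i && (i != j))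
          F (incr_nth (remove_cell l j) i).
Proof.
move=> Hr; rewrite (sum_upper_covers_iota (N := N)) ?ltnS ?size_remove_cell //.
rewrite (@sum_cond_D1 _ _ _ _ j) ?iota_uniq ?addable_remove_cell ?remove_cellK //.
by rewrite mem_iota add0n ltnS; apply/ltnW/removable_lt_size.
Qed.

End Diagonal.

(* The relation [DU = UD + I] between the up and down operators of Young's
   lattice. *)
Lemma sum_upper_lower_covers l (F : seq nat -> nat) : is_part l ->
  \sum_(nu <- upper_covers l) \sum_(mu <- lower_covers nu) F mu =
  F l + \sum_(mu <- lower_covers l) \sum_(nu <- upper_covers mu) F nu.
Proof.
move=> Hl; have HN : size l < (size l).+1 by [].
rewrite (sum_upper_covers_iota _ HN) (sum_lower_covers_iota Hl _ (ltnW HN)).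
under eq_bigr => i Ha do rewrite sum_lower_covers_incr_nth //.
under [in RHS]eq_bigr => j Hr do rewrite sum_upper_covers_remove_cell //.
rewrite !big_split sum_upper_lower_offdiag // addnA; congr (_ + _).
by rewrite !big_const_seq !iter_addn_0 count_addable // mulnS addnC.
Qed.

Lemma sum_upper_covers_nsyt l : is_part l ->
  \sum_(nu <- upper_covers l) nsyt nu = (psize l).+1 * nsyt l.
Proof.
have Hrec mu : is_part mu -> \sum_(nu <- upper_covers mu) nsyt nu =
    nsyt mu + \sum_(mu' <- lower_covers mu) \sum_(nu <- upper_covers mu') nsyt nu.
  move=> Hm; rewrite -sum_upper_lower_covers //; apply: eq_big_seq => nu.
  by case/(upper_covers_part Hm) => Hn Hs; rewrite nsyt_lower_covers // -psize_eq0 // Hs.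
move Hk: (psize l) => k; elim: k l Hk => [|k IH] l Hk Hl.
all: rewrite Hrec // mulSn; congr (_ + _).
  by rewrite big1_seq // => mu /(lower_covers_part Hl) []; rewrite Hk.
rewrite (eq_big_seq (fun mu => k.+1 * nsyt mu)) => [|mu /(lower_covers_part Hl) [Hm]].
  by rewrite -big_distrr sum_lower_covers_nsyt // Hk mul1n.
by rewrite Hk => -[Hs]; rewrite IH.
Qed.

Lemma sum_lower_covers_weighted (H : nat -> nat) nu : is_part nu ->
  \sum_(mu <- lower_covers nu) H (psize mu) * nsyt mu =
  (0 < psize nu) * H (psize nu).-1 * nsyt nu.
Proof.
move=> Hn; rewrite (eq_big_seq (fun mu => H (psize nu).-1 * nsyt mu)); last first.
  by move=> mu /(lower_covers_part Hn) [_ ->].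
by rewrite -big_distrr sum_lower_covers_nsyt //= mulnA [_ * H _]mulnC.
Qed.

Lemma sum_upper_covers_weighted (H : nat -> nat) l : is_part l ->
  \sum_(nu <- upper_covers l) H (psize nu) * nsyt nu =
  (psize l).+1 * H (psize l).+1 * nsyt l.
Proof.
move=> Hl; rewrite (eq_big_seq (fun nu => H (psize l).+1 * nsyt nu)); last first.
  by move=> nu /(upper_covers_part Hl) [_ ->].
by rewrite -big_distrr sum_upper_covers_nsyt //= mulnA [_ * H _]mulnC.
Qed.

(* If the walks ending at each [c] number [G (psize c) * nsyt c], then the
   walks extended by one step of phase [p] number [rcons_weight p G] (resp.
   [cons_weight p G] at the front) of the endpoint's size times its [nsyt]. *)
Definition rcons_weight (p : nat) (G : nat -> nat) (k : nat) : nat :=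
  if p < 2 then G k + (0 < k) * G k.-1 else k.+1 * G k.+1.
Definition cons_weight (p : nat) (G : nat -> nat) (k : nat) : nat :=
  if p < 2 then G k + k.+1 * G k.+1 else (0 < k) * G k.-1.

Lemma has_card_walk_rcons_weighted ph m a (G : nat -> nat) :
  (forall c, is_part c -> has_card (walk ph m a c) (G (psize c) * nsyt c)) ->
  forall b, is_part b ->
  has_card (walk ph m.+1 a b) (rcons_weight ((ph + m) %% 3) G (psize b) * nsyt b).
Proof.
move=> HG b Hb.
have := @has_card_walk_rcons ph m a b (fun c => G (psize c) * nsyt c) Hb.
move=> /(_ (fun c Hc => HG c (prev_shapes_part Hb Hc))).
rewrite /prev_shapes /rcons_weight; case: ifP => _.
- by rewrite big_cons (sum_lower_covers_weighted G) // mulnDl.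
- by rewrite (sum_upper_covers_weighted G).
Qed.

Lemma has_card_walk_cons_weighted ph m b (G : nat -> nat) :
  (forall c, is_part c -> has_card (walk ph.+1 m c b) (G (psize c) * nsyt c)) ->
  forall a, is_part a ->
  has_card (walk ph m.+1 a b) (cons_weight (ph %% 3) G (psize a) * nsyt a).
Proof.
move=> HG a Ha.
have := @has_card_walk_cons ph m a b (fun c => G (psize c) * nsyt c) Ha.
move=> /(_ (fun c Hc => HG c (next_shapes_part Ha Hc))).
rewrite /next_shapes /cons_weight; case: ifP => _.
- by rewrite big_cons (sum_upper_covers_weighted G) // mulnDl.
- by rewrite (sum_lower_covers_weighted G).
Qed.

Definition up_coef (n k : nat) : nat := (n.+1)`! * 'C(n, k).
Definition down_coef (n k : nat) : nat := (n.+1)`! %/ (k.+1)`! * 'C(n, k).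

Lemma down_coefM_fact n k : down_coef n k * (k.+1)`! = up_coef n k.
Proof.
rewrite /down_coef /up_coef; case: (leqP k n) => Hk.
- have Hd : (k.+1)`! %| (n.+1)`!.
    by rewrite -(bin_fact (_ : k.+1 <= n.+1)) // mulnCA dvdn_mulr.
  by rewrite mulnAC divnK.
- by rewrite bin_small // !muln0 mul0n.
Qed.

Lemma binS_pred n k : 'C(n.+1, k) = (0 < k) * 'C(n, k.-1) + 'C(n, k).
Proof. by case: k => [|k]; rewrite ?bin0 // binS mul1n addnC. Qed.

Lemma up_coefS n k :
  up_coef n.+1 k = k.+1 * (up_coef n k.+1 + 2 * up_coef n k + (0 < k) * up_coef n k.-1).
Proof.
have /= E := mul_bin_diag n.+2 k.
rewrite /up_coef [(n.+2)`!]factS -mulnA mulnCA E binS (binS_pred n k) binS.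
move: ('C(n, k.+1)) ('C(n, k)) ('C(n, k.-1)) ((n.+1)`!) ((0 < k) : nat) => a b c F e.
nia.
Qed.

Lemma down_coefS n k : down_coef n.+1 k =
  (0 < k) * down_coef n k.-1 + down_coef n k * k.+1
  + (down_coef n k + down_coef n k.+1 * k.+2) * k.+1.
Proof.
apply/eqP; rewrite -(eqn_pmul2r (fact_gt0 k.+1)) down_coefM_fact up_coefS; apply/eqP.
have E1 : (0 < k) * down_coef n k.-1 * (k.+1)`! = (0 < k) * (k.+1 * up_coef n k.-1).
  by case: k => [|k] //=; rewrite !mul1n factS mulnCA down_coefM_fact.
have E2 : down_coef n k.+1 * k.+2 * (k.+1)`! = up_coef n k.+1.
  by rewrite -down_coefM_fact [(k.+2)`!]factS mulnA.
have E3 : down_coef n k * k.+1 * (k.+1)`! = k.+1 * up_coef n k.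
  by rewrite mulnAC down_coefM_fact mulnC.
have E4 : (down_coef n k + down_coef n k.+1 * k.+2) * k.+1 * (k.+1)`! =
    k.+1 * (up_coef n k + up_coef n k.+1).
  by rewrite mulnAC mulnDl down_coefM_fact E2 mulnC.
rewrite mulnDl mulnDl E1 E3 E4.
move: (up_coef n k.+1) (up_coef n k) (up_coef n k.-1) ((0 < k) : nat) => a b c e.
nia.
Qed.

Lemma rcons_weight_up_coef n k :
  rcons_weight 2 (rcons_weight 1 (rcons_weight 0 (up_coef n))) k = up_coef n.+1 k.
Proof.
rewrite /rcons_weight /= up_coefS.
move: (up_coef n k.+1) (up_coef n k) (up_coef n k.-1) ((0 < k) : nat) => a b c e.
nia.
Qed.

Lemma cons_weight_down_coef n k :
  cons_weight 0 (cons_weight 1 (cons_weight 2 (down_coef n))) k = down_coef n.+1 k.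
Proof.
rewrite /cons_weight /= down_coefS.
move: (down_coef n k.+1) (down_coef n k) (down_coef n k.-1) ((0 < k) : nat) => a b c e.
nia.
Qed.

Lemma phase_3nD n r : (0 + (3 * n + r)) %% 3 = r %% 3.
Proof. by rewrite add0n mulnC modnMDl. Qed.

Lemma has_card_walk_from_nil n lam : is_part lam ->
  has_card (walk 0 (3 * n) [::] lam) (up_coef n (psize lam) * nsyt lam).
Proof.
elim: n lam => [|n IH] lam Hl.
  have := has_card_walk0 0 [::] lam; congr has_card.
  rewrite /up_coef; case: (eqVneq [::] lam) => [<-|Hne] //=.
  by rewrite bin_small ?muln0 // lt0n psize_eq0 // eq_sym.
have Hstep r G : (forall c, is_part c ->
    has_card (walk 0 (3 * n + r) [::] c) (G (psize c) * nsyt c)) ->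
  forall b, is_part b ->
    has_card (walk 0 (3 * n + r.+1) [::] b) (rcons_weight (r %% 3) G (psize b) * nsyt b).
  by move=> HG b Hb; rewrite addnS -(phase_3nD n); apply: has_card_walk_rcons_weighted.
have W0 := Hstep 0 (up_coef n); rewrite addn0 in W0; have {}W0 := W0 IH.
have W1 := Hstep 1 _ W0; have W2 := Hstep 2 _ W1; have := W2 _ Hl.
by rewrite -addn3 -mulnSr; congr has_card; rewrite rcons_weight_up_coef.
Qed.

Lemma has_card_walk_to_nil n lam : is_part lam ->
  has_card (walk 0 (3 * n) lam [::]) (down_coef n (psize lam) * nsyt lam).
Proof.
elim: n lam => [|n IH] lam Hl.
  have := has_card_walk0 0 lam [::]; congr has_card.
  rewrite /down_coef Hl; case: (eqVneq lam [::]) => [->|Hne] //=.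
  by rewrite bin_small ?muln0 // lt0n psize_eq0.
have W3 c : is_part c -> has_card (walk 3 (3 * n) c [::]) (down_coef n (psize c) * nsyt c).
  by move=> Hc; apply: (has_card_ext (P := walk 0 _ _ _)) (IH c Hc) => w; rewrite -walk_phaseD3.
have W2 := has_card_walk_cons_weighted W3.
have W1 := has_card_walk_cons_weighted W2.
have := has_card_walk_cons_weighted W1 Hl.
by rewrite mulnSr addn3; congr has_card; rewrite cons_weight_down_coef.
Qed.

Definition add_entry (t : seq (seq nat)) (j k : nat) : seq (seq nat) :=
  if j < size t then set_nth [::] t j (rcons (nth [::] t j) k) else rcons t [:: k].

Lemma nth_add_entry t j k i : j <= size t ->
  nth [::] (add_entry t j k) i = if i == j then rcons (nth [::] t j) k else nth [::] t i.
Proof.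
rewrite /add_entry => Hj; case: ifP => H; first by rewrite nth_set_nth.
have Ej : j = size t by apply/eqP; rewrite eqn_leq Hj leqNgt H.
rewrite nth_rcons -Ej; case: (ltngtP i j) => [Hi|Hi|E] //.
- by rewrite nth_default // -Ej ltnW.
- by rewrite nth_default // -Ej.
Qed.

Lemma size_add_entry t j k : j <= size t ->
  size (add_entry t j k) = if j < size t then size t else j.+1.
Proof.
rewrite /add_entry => Hj; case: ifP => H; first by rewrite size_set_nth; apply/maxn_idPr.
have Ej : size t = j by move: H Hj; lia.
by rewrite size_rcons Ej.
Qed.

Lemma add_entry_cons x t j k : add_entry (x :: t) j.+1 k = x :: add_entry t j k.
Proof. by rewrite /add_entry /= ltnS; case: ifP. Qed.

Lemma perm_flatten_add_entry t j k : j <= size t ->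
  perm_eq (flatten (add_entry t j k)) (rcons (flatten t) k).
Proof.
elim: t j => [|x t IH] [|j] //= Hj.
- by rewrite /add_entry /= cat_rcons rcons_cat perm_cat2l perm_sym perm_rcons.
- rewrite add_entry_cons /= rcons_cat perm_cat2l; exact: IH.
Qed.

Lemma nth0_rcons (s : seq nat) k p :
  nth 0 (rcons s k) p = if p == size s then k else nth 0 s p.
Proof.
rewrite nth_rcons; case: (ltnP p (size s)) => H; first by rewrite (ltn_eqF H).
by case: eqP => // _; rewrite nth_default.
Qed.

Lemma size_nth_add_entry t j k i : j <= size t ->
  size (nth [::] (add_entry t j k) i) = size (nth [::] t i) + (i == j).
Proof.
move=> Hj; rewrite nth_add_entry //.
by case: eqP => [->|_]; rewrite ?size_rcons ?addn1 ?addn0.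
Qed.

Lemma nth_nth_add_entry t j k i p : j <= size t ->
  nth 0 (nth [::] (add_entry t j k) i) p =
  if (i == j) && (p == size (nth [::] t j)) then k else nth 0 (nth [::] t i) p.
Proof. by move=> Hj; rewrite nth_add_entry //; case: eqP => [->|_] //=; rewrite nth0_rcons. Qed.

Lemma size_nth_rows (t : seq (seq nat)) mu : map size t = mu ->
  forall i, size (nth [::] t i) = nth 0 mu i.
Proof.
move=> <- i; case: (ltnP i (size t)) => H; first by rewrite (nth_map [::]).
by rewrite !nth_default ?size_map.
Qed.

Lemma perm_flatten_add_entry_iota t j p : j <= size t ->
  perm_eq (flatten (add_entry t j p.+1)) (iota 1 p.+1) = perm_eq (flatten t) (iota 1 p).
Proof.
move=> Hj; rewrite (permPl (perm_flatten_add_entry _ Hj)).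
have -> : iota 1 p.+1 = rcons (iota 1 p) p.+1.
  by rewrite -[p.+1]addn1 iotaD /= cats1 add1n addn1.
by rewrite perm_rcons perm_sym perm_rcons perm_cons perm_sym.
Qed.

Lemma syt_nth_bound mu t : is_syt mu t -> forall i p, p < nth 0 mu i ->
  0 < nth 0 (nth [::] t i) p < (psize mu).+1.
Proof.
case=> Hm [Hp [Hr Hc]] i p Hip.
have Hi : i < size t.
  rewrite ltnNge; apply/negP => H; move: Hip; rewrite -(size_nth_rows Hm) nth_default //.
have Hin : nth 0 (nth [::] t i) p \in flatten t.
  apply/flattenP; exists (nth [::] t i); first exact: mem_nth.
  by apply: mem_nth; rewrite (size_nth_rows Hm).
by move: Hin; rewrite (perm_mem Hp) mem_iota add1n.
Qed.

Lemma syt_mem_bound mu t y r : is_syt mu t -> r \in t -> y \in r -> 0 < y < (psize mu).+1.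
Proof.
case=> Hm [Hp _] Hr Hy.
have Hin : y \in flatten t by apply/flattenP; exists r.
by move: Hin; rewrite (perm_mem Hp) mem_iota add1n.
Qed.

Lemma sorted_ltn_rcons (s : seq nat) k : sorted ltn s -> (forall y, y \in s -> y < k) ->
  sorted ltn (rcons s k).
Proof.
case: s => //= x s Hs Hlt; rewrite rcons_path Hs /=; apply: Hlt; exact: mem_last.
Qed.

Lemma sorted_nth_rows (t : seq (seq nat)) : (forall r, r \in t -> sorted ltn r) ->
  forall i, sorted ltn (nth [::] t i).
Proof.
move=> H i; case: (ltnP i (size t)) => Hi; first by apply: H; apply: mem_nth.
by rewrite nth_default.
Qed.

Lemma syt_add_entry mu (j : nat) t : is_part mu -> addable mu j -> is_syt mu t ->
  is_syt (incr_nth mu j) (add_entry t j (psize mu).+1).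
Proof.
move=> Hm Ha Hs; have [Hsz [Hp [Hr Hc]]] := Hs.
set k := (psize mu).+1.
have Hst : size t = size mu by rewrite -Hsz size_map.
have Hj : j <= size t by rewrite Hst; apply: addable_le_size.
have Hrs := size_nth_rows Hsz.
have Hrow i : size (nth [::] (add_entry t j k) i) = nth 0 mu i + (i == j).
  by rewrite size_nth_add_entry // Hrs.
split; last split; last split.
- apply: (eq_from_nth (x0 := 0)).
    by rewrite size_map size_add_entry // size_incr_nth Hst.
  move=> i Hi; rewrite (nth_map [::]); last by move: Hi; rewrite size_map.
  by rewrite Hrow nth_incr_nth addnC eq_sym.
- by rewrite psize_incr_nth perm_flatten_add_entry_iota.
- move=> r /(nthP [::]) [i Hi <-]; rewrite nth_add_entry //; case: eqP => _.
  + apply: sorted_ltn_rcons; first exact: sorted_nth_rows.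
    move=> y Hy; case: (ltnP j (size t)) => Hjt.
    * by case/andP: (syt_mem_bound Hs (mem_nth [::] Hjt) Hy).
    * by move: Hy; rewrite nth_default.
  + exact: sorted_nth_rows.
- move=> i p; rewrite Hrow !nth_nth_add_entry // Hrs => Hp1.
  case: (ltnP p (nth 0 mu i.+1)) => Hp2.
  + rewrite (_ : (i.+1 == j) && (p == nth 0 mu j) = false); last first.
      by case: eqP => // <-; rewrite (ltn_eqF Hp2).
    rewrite (_ : (i == j) && (p == nth 0 mu j) = false); last first.
      by case: eqP => // <-; rewrite (ltn_eqF (leq_trans Hp2 (part_nth_leS Hm i))).
    by apply: Hc; rewrite Hrs.
  + have Ej : i.+1 = j by move: Hp1 Hp2; case: eqP => //= _; lia.
    have Ep : p = nth 0 mu j by rewrite -Ej; move: Hp1 Hp2; rewrite Ej eqxx /=; lia.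
    rewrite Ej Ep !eqxx /= (_ : (i == j) = false); last by rewrite -Ej; lia.
    have Hij : nth 0 mu j < nth 0 mu i by move: Ha; rewrite /addable -Ej /=.
    by case/andP: (syt_nth_bound Hs Hij).
Qed.

Lemma syt_remove_entry mu (j : nat) t : is_part mu -> j <= size t -> [::] \notin t ->
  is_syt (incr_nth mu j) (add_entry t j (psize mu).+1) -> is_syt mu t.
Proof.
move=> Hm Hj Ht [Hsz [Hp [Hr Hc]]].
set k := (psize mu).+1.
have Hrs := size_nth_rows Hsz.
have Hrow i := size_nth_add_entry k i Hj.
have Hts i : size (nth [::] t i) = nth 0 mu i.
  by have := Hrs i; rewrite Hrow nth_incr_nth addnC eq_sym => /addnI.
have Hent i p : p < size (nth [::] t i) ->
    nth 0 (nth [::] (add_entry t j k) i) p = nth 0 (nth [::] t i) p.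
  move=> Hip; rewrite nth_nth_add_entry //.
  by case: eqP => [E|_] //=; rewrite -E (ltn_eqF Hip).
split; last split; last split.
- have Hst : size mu = size t.
    apply: part_size_eq => // i; rewrite -Hts.
    case: (ltnP i (size t)) => Hi; last by rewrite nth_default.
    by rewrite lt0n size_eq0; apply/esym/(contraNneq _ Ht) => <-; rewrite mem_nth.
  apply: (eq_from_nth (x0 := 0)); first by rewrite size_map.
  by move=> i Hi; rewrite (nth_map [::]) ?Hts //; move: Hi; rewrite size_map.
- by move: Hp; rewrite psize_incr_nth perm_flatten_add_entry_iota.
- move=> r /(nthP [::]) [i Hi <-].
  have := sorted_nth_rows Hr i; rewrite nth_add_entry //; case: eqP => [->|_] // H.
  apply: (subseq_sorted _ (subseq_rcons _ _) H) => x y z; exact: ltn_trans.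
- move=> i p Hp1.
  have Hp2 : p < size (nth [::] t i).
    by move: Hp1; rewrite !Hts => H; apply: leq_trans H (part_nth_leS Hm i).
  rewrite -Hent // -(Hent i.+1) //; apply: Hc.
  by rewrite Hrow; apply: leq_trans Hp1 (leq_addr _ _).
Qed.

Lemma syt_max_corner lam t : is_part lam -> 0 < psize lam -> is_syt lam t ->
  exists j r, nth [::] t j = rcons r (psize lam) /\ removable lam j.
Proof.
move=> Hl Hk0 Hs; have [Hsz [Hp [Hr Hc]]] := Hs.
set k := psize lam; have Hrs := size_nth_rows Hsz.
have : k \in flatten t by rewrite (perm_mem Hp) mem_iota /k; lia.
case/flattenP => r /(nthP [::]) [j Hj Er] Hkr.
set p := index k r; have Hpr : p < size r by rewrite index_mem.
have Ekp : nth 0 r p = k by rewrite nth_index.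
have Hmax i q : q < nth 0 lam i -> nth 0 (nth [::] t i) q <= k.
  by move=> Hq; case/andP: (syt_nth_bound Hs Hq).
have Hplast : p.+1 = size r.
  apply/eqP; rewrite eqn_leq Hpr leqNgt; apply/negP => H.
  have Hrt : r \in t by rewrite -Er mem_nth.
  have /(sortedP 0) /(_ p H) := Hr r Hrt; rewrite Ekp.
  by have := Hmax j p.+1; rewrite -Hrs Er => /(_ H); lia.
exists j, (take p r); split; first by rewrite Er -Ekp -take_nth // Hplast take_size.
rewrite /removable ltnNge; apply/negP => H.
have Hp1 : p < size (nth [::] t j.+1) by rewrite Hrs; apply: leq_trans H; rewrite -Hrs Er.
have H1 := Hc j p Hp1; rewrite Er Ekp in H1.
have H2 : nth 0 (nth [::] t j.+1) p <= k by apply: Hmax; rewrite -Hrs.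
by have := leq_ltn_trans H2 H1; rewrite ltnn.
Qed.

Lemma add_entry_last (t : seq (seq nat)) j r k :
  [::] \notin t -> nth [::] t j = rcons r k -> (r = [::] -> size t = j.+1) ->
  exists t', [/\ j <= size t', [::] \notin t' & t = add_entry t' j k].
Proof.
move=> Ht Etj Hlast; have Hj : j < size t.
  by rewrite ltnNge; apply/negP => H; move: Etj; rewrite nth_default //; case: r {Hlast}.
case: r Etj Hlast => [|x r] Etj Hlast.
- have Hsj := Hlast erefl; have Htj : size (take j t) = j by rewrite size_takel // ltnW.
  exists (take j t); split; first by rewrite Htj.
  + by apply: contra Ht; apply: mem_take.
  + have Etj' : nth [::] t j = [:: k] by [].
    by rewrite /add_entry Htj ltnn -Etj' -take_nth // -Hsj take_size.
- have Hs' : size (set_nth [::] t j (x :: r)) = size t by rewrite size_set_nth; apply/maxn_idPr.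
  exists (set_nth [::] t j (x :: r)); split; first by rewrite Hs' ltnW.
  + rewrite set_nthE Hj mem_cat inE !negb_or; apply/and3P; split=> //.
    * by apply: contra Ht; apply: mem_take.
    * by apply: contra Ht; apply: mem_drop.
  + rewrite /add_entry Hs' Hj nth_set_nth /= eqxx -Etj set_set_nth eqxx.
    apply: (eq_from_nth (x0 := [::])); first by rewrite size_set_nth; apply/esym/maxn_idPr.
    by move=> i _; rewrite nth_set_nth /=; case: eqP => // ->.
Qed.

Lemma syt_split_max lam t : is_part lam -> 0 < psize lam -> is_syt lam t ->
  exists2 j, removable lam j &
    exists2 t', is_syt (remove_cell lam j) t' & t = add_entry t' j (psize lam).
Proof.
move=> Hl Hk0 Hs; have [Hsz _] := Hs.
have Hrs := size_nth_rows Hsz.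
have Hst : size t = size lam by rewrite -Hsz size_map.
have [j [r [Etj Hrem]]] := syt_max_corner Hl Hk0 Hs.
have Ht : [::] \notin t.
  apply/negP => /(nthP [::]) [i Hi Ei].
  by move: Hi; rewrite Hst -part_nth_gt0 // -Hrs Ei.
have Hlast : r = [::] -> size t = j.+1.
  move=> Er; have Hj1 : nth 0 lam j = 1 by rewrite -Hrs Etj Er.
  have Hj : j < size lam by rewrite -part_nth_gt0 // Hj1.
  move: Hrem; rewrite /removable Hj1 ltnS leqn0 eqn0Ngt part_nth_gt0 // -leqNgt => Hj'.
  by apply/eqP; rewrite Hst eqn_leq Hj Hj'.
have [t' [Hj Ht' Et]] := add_entry_last Ht Etj Hlast.
exists j => //; exists t' => //.
apply: (syt_remove_entry (remove_cell_part Hl Hrem) Hj Ht').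
by rewrite remove_cellK // -psize_remove_cell // -Et.
Qed.

Lemma add_entry_inj t1 t2 j k : size t1 = size t2 -> j <= size t1 ->
  add_entry t1 j k = add_entry t2 j k -> t1 = t2.
Proof.
move=> Hs Hj E; apply: (eq_from_nth (x0 := [::])) => // i _.
have := congr1 (nth [::] ^~ i) E; rewrite /= !nth_add_entry -?Hs //.
by case: eqP => [->|_] // /rcons_inj [].
Qed.

Lemma add_entry_row_inj t1 t2 j1 j2 k : j1 <= size t1 -> j2 <= size t2 ->
  k \notin flatten t1 -> add_entry t1 j1 k = add_entry t2 j2 k -> j1 = j2.
Proof.
move=> Hj1 Hj2 Hk E; apply/eqP; apply: contraNT Hk => Hne.
have := congr1 (nth [::] ^~ j2) E; rewrite /= !nth_add_entry // eqxx eq_sym (negbTE Hne).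
move=> Erow; have Hin : k \in nth [::] t1 j2 by rewrite Erow mem_rcons mem_head.
have Hj2t : j2 < size t1 by rewrite ltnNge; apply: contraL Hin => H; rewrite nth_default.
by apply/flattenP; exists (nth [::] t1 j2); rewrite ?mem_nth.
Qed.

Lemma size_syt mu t : is_syt mu t -> size t = size mu.
Proof. by case=> <- _; rewrite size_map. Qed.

Lemma has_card_syt lam : is_part lam -> has_card (is_syt lam) (nsyt lam).
Proof.
move Hk: (psize lam) => k; elim: k lam Hk => [|k IH] lam Hk Hl.
  have -> : lam = [::] by apply/eqP; rewrite -psize_eq0 // Hk.
  exists [:: [::]]; split=> //; split=> // t; rewrite inE; split=> [/eqP ->|] //.
  by case=> Hsz _; apply/eqP; case: t Hsz.
have Hne : lam != [::] by rewrite -psize_eq0 // Hk.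
rewrite nsyt_lower_covers // /lower_covers big_map.
apply: (@has_card_bigcup _ _ _
  (fun j t => exists2 t', is_syt (remove_cell lam j) t' & t = add_entry t' j k.+1)).
- by rewrite filter_uniq // iota_uniq.
- move=> j; rewrite mem_filter => /andP [Hr _].
  have Hd := remove_cell_part Hl Hr; have Hp := psize_remove_cell Hl Hr.
  apply: has_card_inj_image => [|t1 t2 H1 H2].
    by apply: IH => //; move: Hp; rewrite Hk => -[].
  apply: add_entry_inj; first by rewrite (size_syt H1) (size_syt H2).
  by rewrite (size_syt H1) addable_le_size // addable_remove_cell.
- move=> j1 j2 t; rewrite !mem_filter => /andP [Hr1 _] /andP [Hr2 _].
  move=> [t1 H1 ->] [t2 H2]; apply: add_entry_row_inj.
  + by rewrite (size_syt H1) addable_le_size // addable_remove_cell.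
  + by rewrite (size_syt H2) addable_le_size // addable_remove_cell.
  + case: H1 => _ [Hp _].
    by rewrite (perm_mem Hp) mem_iota add1n -psize_remove_cell // Hk ltnn andbF.
- move=> t; split.
  + move=> Hs; have Hk0 : 0 < psize lam by rewrite Hk.
    have [j Hr [t' Ht' Et]] := syt_split_max Hl Hk0 Hs.
    exists j; last by exists t'; rewrite -?Hk.
    by rewrite mem_filter Hr mem_iota add0n removable_lt_size.
  + case=> j; rewrite mem_filter => /andP [Hr _] [t' Ht' ->].
    have := syt_add_entry (remove_cell_part Hl Hr) (addable_remove_cell Hl Hr) Ht'.
    by rewrite remove_cellK // -psize_remove_cell // Hk.
Qed.

Unset Implicit Arguments.

Theorem mainTheorem11 (n : nat) (lam : seq nat) :
  is_part lam ->
  let k := psize lam in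
  exists f : nat,
    has_card (is_syt lam) f /\
    has_card (T_walk n [::] lam) ((n.+1)`! * 'C(n, k) * f) /\
    has_card (T_walk n lam [::]) ((n.+1)`! %/ (k.+1)`! * 'C(n, k) * f).
Proof.
move=> Hl k; exists (nsyt lam); split; first exact: has_card_syt.
split; apply: (has_card_ext (fun w => iff_sym (T_walkE _ _ _ w))).
- exact: has_card_walk_from_nil.
- exact: has_card_walk_to_nil.
Qed.
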